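(* Let $\mathcal{Z}=\mathbb{Z}^d$, $p\ge1$, $q\ge0$, and let $(a_{\ell;\mathbf{j}})_{\ell\in\mathcal{Z},\mathbf{j}\in\mathcal{Z}^p}$ be coefficients such that $a_{\ell;\mathbf{j}}=0$ whenever $\max_{1\le n\le d}|\mathcal{M}(\ell,\mathbf{j})^n|>q$, where $\mathcal{M}(\ell,\mathbf{j})=\ell-j_1-\cdots-j_p\in\mathbb{Z}^d$. There is a constant $C$ depending only on $d,q,p$ such that for all $M\in\mathbb{N}\cup\{+\infty\}$ and all integers $N\ge2$: (i) $\#\{(\ell,j_1,\dots,j_p)\in\mathcal{K}_M^{p+1}: \|j_1\|\cdots\|j_p\|\le N,\ a_{\ell;\mathbf{j}}\ne0\}\le C N^d(\log N)^{p-1}$; (ii) $\#\{(\ell,j_1,\dots,j_p)\in(\mathcal{K}^*_M)^{p+1}: |j_1|\cdots|j_p|\le N,\ a_{\ell;\mathbf{j}}\ne0\}\le C N(\log N)^{dp-1}$.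
   Context: For $j=(j^1,\dots,j^d)\in\mathbb{Z}^d$: $\|j\|=\max(1,|j^1|,\dots,|j^d|)$ and the sparse size $|j|=\prod_{n=1}^d(1+|j^n|)$. For $M\in\mathbb{N}\cup\{+\infty\}$, $\mathcal{K}_M=\{j:\|j\|\le M\}$ and $\mathcal{K}^*_M=\{j:|j|\le M\}$. $\#F$ is the cardinality of $F$. *)

(* points of Z^d are lists of integers of length d. *)
From Stdlib Require Import Reals ZArith List.
Import ListNotations.
Open Scope Z_scope.

Definition normInf (j : list Z) : Z :=
  fold_right (fun x m => Z.max (Z.abs x) m) 1 j.

Definition maxAbs (v : list Z) : Z :=
  fold_right (fun x m => Z.max (Z.abs x) m) 0 v.

Definition sparseSize (j : list Z) : Z :=
  fold_right (fun x m => (1 + Z.abs x) * m) 1 j.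

(* M = None stands for M = +infinity *)
Definition inK (M : option nat) (j : list Z) : Prop :=
  match M with None => True | Some m => normInf j <= Z.of_nat m end.

Definition inKstar (M : option nat) (j : list Z) : Prop :=
  match M with None => True | Some m => sparseSize j <= Z.of_nat m end.

Fixpoint vsub (u v : list Z) : list Z :=
  match u, v with
  | x :: u', y :: v' => (x - y) :: vsub u' v'
  | _, _ => u
  end.

Definition Mvec (l : list Z) (js : list (list Z)) : list Z :=
  fold_left vsub js l.

Definition wf (d p : nat) (l : list Z) (js : list (list Z)) : Prop :=
  length l = d /\ length js = p /\ Forall (fun j => length j = d) js.

Definition prodZ (f : list Z -> Z) (js : list (list Z)) : Z :=
  fold_right (fun j m => f j * m) 1 js.

From Stdlib Require Import Reals ZArith List Lia Lra.
Import ListNotations.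

(* Since a_{l;j} <> 0 forces max_n |M(l,j)^n| <= q and l = M(l,j) + j_1 + ... + j_p,
   each admissible multi-index (j_1, ..., j_p) accounts for at most (2q+1)^d tuples
   (lemma [tuples_count]).
   It remains to list the multi-indices of bounded weight product, which is done by
   a generic dyadic covering ([dyadic_cover]): for sequences x_0, ..., x_n with
   weights w(x_i) >= 1 and product at most N, guess the dyadic scale 2^e <= w(x_0)
   (log2 N + 1 choices), pick x_0 in a ball of radius 2^(e+1), and recurse with the
   budget N / 2^e.  If balls of radius m have at most c m^D points, this lists at
   most c (c 2^D)^n N^D (log2 N + 1)^n sequences ([dyadic_cover_length]).
   Part (i) applies it to the p vectors j_i with the sup-norm (D = d), part (ii) to
   the dp coordinates of (j_1, ..., j_p) with weight 1 + |x| (D = 1), giving the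
   integer bounds [dense_count] and [sparse_count].  Finally log2 N + 1 <= 4 ln N
   turns these into the stated real bounds. *)

Open Scope Z_scope.

Lemma length_flat_map_le {X Y} (f : X -> list Y) (l : list X) (B : Z) :
  (forall y, In y l -> Z.of_nat (length (f y)) <= B) ->
  Z.of_nat (length (flat_map f l)) <= Z.of_nat (length l) * B.
Proof.
  induction l as [|x l IH]; intros Hf; cbn [flat_map length]; [lia|].
  rewrite length_app, Nat2Z.inj_add, Nat2Z.inj_succ.
  assert (Hx := Hf x (or_introl eq_refl)).
  assert (Hl : Z.of_nat (length (flat_map f l)) <= Z.of_nat (length l) * B)
    by (apply IH; intros y Hy; apply Hf; right; exact Hy).
  lia.
Qed.

Definition weightProd {X} (w : X -> Z) (xs : list X) : Z :=
  fold_right (fun x m => w x * m) 1 xs.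

Lemma weightProd_ge1 {X} (w : X -> Z) (xs : list X) :
  (forall x, 1 <= w x) -> 1 <= weightProd w xs.
Proof.
  intros Hw; induction xs as [|x xs IH]; cbn; [lia|].
  specialize (Hw x); fold (weightProd w xs); nia.
Qed.

Lemma weightProd_app {X} (w : X -> Z) (xs ys : list X) :
  weightProd w (xs ++ ys) = weightProd w xs * weightProd w ys.
Proof.
  unfold weightProd; induction xs as [|x xs IH]; [symmetry; apply Z.mul_1_l|].
  cbn [app fold_right]; rewrite IH; ring.
Qed.

Definition scales (L : Z) : list Z := map Z.of_nat (seq 0 (S (Z.to_nat L))).

Lemma in_scales L e : 0 <= e <= L -> In e (scales L).
Proof. intros He; apply in_map_iff; exists (Z.to_nat e); split; [lia|]; apply in_seq; lia. Qed.

Lemma scales_spec L e : 0 <= L -> In e (scales L) -> 0 <= e <= L.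
Proof. intros HL He; apply in_map_iff in He as [k [<- Hk]]; apply in_seq in Hk; lia. Qed.

Lemma length_scales L : 0 <= L -> Z.of_nat (length (scales L)) = L + 1.
Proof. intros HL; unfold scales; rewrite length_map, length_seq; lia. Qed.

Lemma budget_split (N e : Z) : 1 <= N -> 0 <= e <= Z.log2 N ->
  1 <= N / 2 ^ e /\ 2 ^ e * (N / 2 ^ e) <= N /\ Z.log2 (N / 2 ^ e) <= Z.log2 N.
Proof.
  intros HN He.
  assert (Hpos : 0 < 2 ^ e) by (apply Z.pow_pos_nonneg; lia).
  assert (Hle : 2 ^ e <= N).
  { apply Z.le_trans with (2 ^ Z.log2 N); [apply Z.pow_le_mono_r; lia|].
    apply Z.log2_spec; lia. }
  assert (H1 : 1 <= N / 2 ^ e) by (apply Z.div_le_lower_bound; lia).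
  assert (H2 : 2 ^ e * (N / 2 ^ e) <= N) by (apply Z.mul_div_le; lia).
  repeat split; try lia. apply Z.log2_le_mono; nia.
Qed.

Section DyadicCover.

Variable X : Type.
(* [ball m] enumerates (a superset of) the admissible points of weight at most [m]. *)
Variable ball : Z -> list X.

Fixpoint dyadic_cover (n : nat) (N : Z) : list (list X) :=
  match n with
  | O => map (fun x => [x]) (ball N)
  | S n' =>
      flat_map (fun e =>
        flat_map (fun x => map (cons x) (dyadic_cover n' (N / 2 ^ e))) (ball (2 ^ (e + 1))))
      (scales (Z.log2 N))
  end.

Section Completeness.

Variable P : X -> Prop.
Variable w : X -> Z.
Hypothesis w_ge1 : forall x, 1 <= w x.
Hypothesis ball_complete : forall m x, P x -> w x <= m -> In x (ball m).

(* Every admissible sequence of length [n + 1] and weight product at most [N]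
   is listed: the scale of its first entry [x] is [e = log2 (w x)], and then
   [w x < 2^(e+1)] while the remaining product is at most [N / 2^e]. *)
Lemma dyadic_cover_complete (n : nat) (xs : list X) (N : Z) :
  length xs = S n -> Forall P xs -> weightProd w xs <= N -> In xs (dyadic_cover n N).
Proof.
  revert xs N; induction n as [|n IH]; intros xs N Hlen HP Hprod.
  - destruct xs as [|x [|]]; try discriminate. inversion HP; subst.
    apply (in_map (fun y => [y])), ball_complete; [assumption|].
    cbn in Hprod; lia.
  - destruct xs as [|x xs]; try discriminate. inversion HP; subst.
    cbn in Hprod; fold (weightProd w xs) in Hprod.
    assert (Hrest := weightProd_ge1 w xs w_ge1). assert (Hx := w_ge1 x).
    set (e := Z.log2 (w x)).
    assert (He : 2 ^ e <= w x < 2 ^ (e + 1))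
      by (rewrite Z.add_1_r; apply Z.log2_spec; lia).
    assert (He0 : 0 <= e) by apply Z.log2_nonneg.
    assert (HeN : e <= Z.log2 N) by (apply Z.log2_le_mono; nia).
    apply in_flat_map; exists e; split; [apply in_scales; lia|].
    apply in_flat_map; exists x; split; [apply ball_complete; [assumption|lia]|].
    apply in_map, IH; [now injection Hlen|assumption|].
    apply Z.div_le_lower_bound; [apply Z.pow_pos_nonneg; lia|nia].
Qed.

End Completeness.

Section Size.

Variables c D : Z.
Hypothesis c_nonneg : 0 <= c.
Hypothesis ball_size : forall m, 1 <= m -> Z.of_nat (length (ball m)) <= c * m ^ D.

Definition cover_bound (n : nat) (N : Z) : Z :=
  c * (c * 2 ^ D) ^ Z.of_nat n * N ^ D * (Z.log2 N + 1) ^ Z.of_nat n.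

(* At a fixed scale [e], the choices of [x_0] and of the tail cost at most the
   bound at level [n + 1] divided by the number [log2 N + 1] of scales, because
   [(2^(e+1))^D (N / 2^e)^D <= 2^D N^D]. *)
Lemma cover_bound_scale (n : nat) (N e : Z) : 1 <= N -> 0 <= e <= Z.log2 N ->
  Z.of_nat (length (ball (2 ^ (e + 1)))) * cover_bound n (N / 2 ^ e)
  <= c * (c * 2 ^ D) ^ Z.of_nat (S n) * N ^ D * (Z.log2 N + 1) ^ Z.of_nat n.
Proof.
  intros HN He. destruct (budget_split N e HN He) as (HN' & Hsplit & Hlog).
  set (N' := N / 2 ^ e) in *. unfold cover_bound.
  assert (H2e : 0 < 2 ^ e) by (apply Z.pow_pos_nonneg; lia).
  assert (Hball : Z.of_nat (length (ball (2 ^ (e + 1)))) <= c * 2 ^ D * (2 ^ e) ^ D).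
  { assert (Hpow : (2 ^ (e + 1)) ^ D = 2 ^ D * (2 ^ e) ^ D)
      by (rewrite Z.pow_add_r, Z.pow_1_r, Z.pow_mul_l by lia; ring).
    rewrite <- Z.mul_assoc, <- Hpow. apply ball_size.
    rewrite Z.pow_add_r by lia; lia. }
  assert (Hvol : (2 ^ e) ^ D * N' ^ D <= N ^ D)
    by (rewrite <- Z.pow_mul_l; apply Z.pow_le_mono_l; split; [nia|exact Hsplit]).
  assert (Hlogs : (Z.log2 N' + 1) ^ Z.of_nat n <= (Z.log2 N + 1) ^ Z.of_nat n)
    by (apply Z.pow_le_mono_l; assert (0 <= Z.log2 N') by apply Z.log2_nonneg; lia).
  assert (0 <= (2 ^ e) ^ D) by (apply Z.pow_nonneg; lia).
  assert (0 <= N' ^ D) by (apply Z.pow_nonneg; lia).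
  assert (0 <= 2 ^ D) by (apply Z.pow_nonneg; lia).
  assert (0 <= (c * 2 ^ D) ^ Z.of_nat n) by (apply Z.pow_nonneg; nia).
  assert (0 <= (Z.log2 N' + 1) ^ Z.of_nat n)
    by (apply Z.pow_nonneg; assert (0 <= Z.log2 N') by apply Z.log2_nonneg; lia).
  rewrite Nat2Z.inj_succ, Z.pow_succ_r by lia.
  set (K := c * 2 ^ D) in *. set (Kn := K ^ Z.of_nat n) in *.
  assert (0 <= K) by nia.
  set (a := (2 ^ e) ^ D) in *. set (b := N' ^ D) in *.
  set (v := (Z.log2 N' + 1) ^ Z.of_nat n) in *. set (v' := (Z.log2 N + 1) ^ Z.of_nat n) in *.
  apply Z.le_trans with (K * a * (c * Kn * b * v)).
  { apply Z.mul_le_mono_nonneg_r; [|exact Hball]. repeat apply Z.mul_nonneg_nonneg; lia. }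
  apply Z.le_trans with (c * (K * Kn) * (a * b) * v); [apply Z.eq_le_incl; ring|].
  apply Z.mul_le_mono_nonneg; [repeat apply Z.mul_nonneg_nonneg; lia| |lia|exact Hlogs].
  apply Z.mul_le_mono_nonneg_l; [repeat apply Z.mul_nonneg_nonneg; lia|exact Hvol].
Qed.

Lemma dyadic_cover_length (n : nat) (N : Z) :
  1 <= N -> Z.of_nat (length (dyadic_cover n N)) <= cover_bound n N.
Proof.
  revert N; induction n as [|n IH]; intros N HN.
  - unfold cover_bound; cbn [dyadic_cover]; rewrite length_map.
    specialize (ball_size N HN); cbn; lia.
  - set (L := Z.log2 N). assert (HL : 0 <= L) by apply Z.log2_nonneg.
    cbn [dyadic_cover]; fold L.
    eapply Z.le_trans.
    { apply length_flat_map_le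
        with (B := c * (c * 2 ^ D) ^ Z.of_nat (S n) * N ^ D * (L + 1) ^ Z.of_nat n).
      intros e He%scales_spec; [|exact HL].
      destruct (budget_split N e HN He) as (HN' & _).
      apply Z.le_trans
        with (Z.of_nat (length (ball (2 ^ (e + 1)))) * cover_bound n (N / 2 ^ e));
        [|apply cover_bound_scale; assumption].
      apply length_flat_map_le.
      intros x _; rewrite length_map; apply IH, HN'. }
    rewrite length_scales by exact HL.
    unfold cover_bound; fold L; rewrite Nat2Z.inj_succ, !Z.pow_succ_r by lia.
    apply Z.eq_le_incl; ring.
Qed.

End Size.
End DyadicCover.

Definition interval (m : Z) : list Z :=
  map (fun k => Z.of_nat k - m) (seq 0 (S (Z.to_nat (2 * m)))).

Lemma interval_complete (m x : Z) : Z.abs x <= m -> In x (interval m).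
Proof.
  intros Hx; apply in_map_iff; exists (Z.to_nat (x + m)); split; [lia|].
  apply in_seq; lia.
Qed.

Lemma length_interval (m : Z) : 0 <= m -> Z.of_nat (length (interval m)) = 2 * m + 1.
Proof. intros Hm; unfold interval; rewrite length_map, length_seq; lia. Qed.

Fixpoint box (d : nat) (m : Z) : list (list Z) :=
  match d with
  | O => [[]]
  | S d' => flat_map (fun x => map (cons x) (box d' m)) (interval m)
  end.

Lemma box_complete (d : nat) (m : Z) (v : list Z) :
  length v = d -> Forall (fun x => Z.abs x <= m) v -> In v (box d m).
Proof.
  revert v; induction d as [|d IH]; intros [|x v] Hlen Hv; try discriminate; [now left|].
  inversion Hv; subst. apply in_flat_map; exists x; split; [now apply interval_complete|].
  apply in_map, IH; [now injection Hlen|assumption].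
Qed.

Lemma length_box (d : nat) (m : Z) :
  0 <= m -> Z.of_nat (length (box d m)) <= (2 * m + 1) ^ Z.of_nat d.
Proof.
  intros Hm; induction d as [|d IH]; [cbn; lia|]. cbn [box].
  eapply Z.le_trans.
  { apply length_flat_map_le with (B := (2 * m + 1) ^ Z.of_nat d).
    intros x _; rewrite length_map; exact IH. }
  rewrite length_interval, Nat2Z.inj_succ, Z.pow_succ_r by lia. lia.
Qed.

(* [normInf] and [maxAbs] are both folds of [max] over the absolute values. *)
Lemma fold_max_abs_bound (b m : Z) (v : list Z) :
  fold_right (fun x acc => Z.max (Z.abs x) acc) b v <= m -> Forall (fun x => Z.abs x <= m) v.
Proof. induction v as [|x v IH]; cbn; intros H; constructor; [lia|apply IH; lia]. Qed.

Lemma normInf_ge1 (j : list Z) : 1 <= normInf j.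
Proof. unfold normInf; induction j; cbn; lia. Qed.

Fixpoint vadd (u v : list Z) : list Z :=
  match u, v with
  | x :: u', y :: v' => (x + y) :: vadd u' v'
  | _, _ => u
  end.

Lemma vadd_vsub (u v : list Z) : vadd (vsub u v) v = u.
Proof.
  revert v; induction u as [|x u IH]; intros [|y v]; cbn; try reflexivity.
  rewrite IH; f_equal; lia.
Qed.

Lemma length_vsub (u v : list Z) : length (vsub u v) = length u.
Proof. revert v; induction u; intros [|y v]; cbn; auto. Qed.

Definition addback (m : list Z) (js : list (list Z)) : list Z :=
  fold_right (fun j acc => vadd acc j) m js.

Lemma addback_Mvec (l : list Z) (js : list (list Z)) : addback (Mvec l js) js = l.
Proof.
  revert l; induction js as [|j js IH]; intros l; [reflexivity|].
  cbn [addback fold_right Mvec fold_left].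
  fold (Mvec (vsub l j) js) (addback (Mvec (vsub l j) js) js).
  rewrite IH; apply vadd_vsub.
Qed.

Lemma length_Mvec (l : list Z) (js : list (list Z)) : length (Mvec l js) = length l.
Proof.
  revert l; induction js as [|j js IH]; intros l; [reflexivity|].
  cbn [Mvec fold_left]; fold (Mvec (vsub l j) js); rewrite IH; apply length_vsub.
Qed.

(* Counting principle of the lemma: once [js] ranges over a list [T], the
   constraint [max |M(l, js)| <= q] leaves at most [(2q+1)^d] choices of [l],
   since [l = M(l, js) + j_1 + ... + j_p]. *)
Lemma tuples_count (d q : nat) (T : list (list (list Z))) (s : list (list Z * list (list Z))) :
  NoDup s ->
  (forall x, In x s ->
     length (fst x) = d /\ maxAbs (Mvec (fst x) (snd x)) <= Z.of_nat q /\ In (snd x) T) ->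
  Z.of_nat (length s) <= Z.of_nat (length T) * (2 * Z.of_nat q + 1) ^ Z.of_nat d.
Proof.
  intros Hnd Hs.
  set (t := flat_map (fun js => map (fun m => (addback m js, js)) (box d (Z.of_nat q))) T).
  assert (Hincl : incl s t).
  { intros [l js] Hx; destruct (Hs _ Hx) as (Hl & Hmax & HT); cbn in *.
    apply in_flat_map; exists js; split; [exact HT|].
    apply in_map_iff; exists (Mvec l js); split; [now rewrite addback_Mvec|].
    apply box_complete; [now rewrite length_Mvec|exact (fold_max_abs_bound _ _ _ Hmax)]. }
  apply Z.le_trans with (Z.of_nat (length t)); [apply Nat2Z.inj_le, NoDup_incl_length; assumption|].
  apply length_flat_map_le; intros js _; rewrite length_map; apply length_box; lia.
Qed.

Fixpoint chunk (d n : nat) (xs : list Z) : list (list Z) :=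
  match n with
  | O => []
  | S n' => firstn d xs :: chunk d n' (skipn d xs)
  end.

Lemma chunk_concat (d : nat) (js : list (list Z)) :
  Forall (fun j => length j = d) js -> chunk d (length js) (concat js) = js.
Proof.
  induction js as [|j js IH]; intros Hjs; [reflexivity|]. inversion Hjs; subst.
  cbn. rewrite firstn_app, skipn_app, Nat.sub_diag, firstn_all, skipn_all, app_nil_r.
  cbn. f_equal. now apply IH.
Qed.

Lemma length_concat_uniform (d : nat) (js : list (list Z)) :
  Forall (fun j => length j = d) js -> length (concat js) = (d * length js)%nat.
Proof.
  induction js as [|j js IH]; intros Hjs; cbn; [lia|]. inversion Hjs; subst.
  rewrite length_app, IH by assumption. lia.
Qed.

Lemma prodZ_sparseSize (js : list (list Z)) :
  prodZ sparseSize js = weightProd (fun x => 1 + Z.abs x) (concat js).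
Proof.
  induction js as [|j js IH]; [reflexivity|].
  cbn [concat]; rewrite weightProd_app, <- IH; reflexivity.
Qed.

Lemma support_bound (A : Type) (zero : A) (a : list Z -> list (list Z) -> A)
  (d p q : nat) (l : list Z) (js : list (list Z)) :
  (forall l js, wf d p l js -> maxAbs (Mvec l js) > Z.of_nat q -> a l js = zero) ->
  wf d p l js -> a l js <> zero -> maxAbs (Mvec l js) <= Z.of_nat q.
Proof.
  intros Ha Hwf Hnz.
  destruct (Z_le_gt_dec (maxAbs (Mvec l js)) (Z.of_nat q)) as [Hle|Hgt]; [exact Hle|].
  now destruct Hnz; apply Ha.
Qed.

(* The integer constants of parts (i) and (ii): [(2q+1)^d] choices of [M(l, js)]
   times the leading factor [c (c 2^D)^n] of [cover_bound]. *)
Definition dense_constant (d p' q : nat) : Z :=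
  (2 * Z.of_nat q + 1) ^ Z.of_nat d
  * (3 ^ Z.of_nat d * (3 ^ Z.of_nat d * 2 ^ Z.of_nat d) ^ Z.of_nat p').

Definition sparse_constant (d k q : nat) : Z :=
  (2 * Z.of_nat q + 1) ^ Z.of_nat d * (3 * (3 * 2) ^ Z.of_nat k).

Lemma dense_constant_nonneg (d p' q : nat) : 0 <= dense_constant d p' q.
Proof. unfold dense_constant; repeat (apply Z.mul_nonneg_nonneg || apply Z.pow_nonneg); lia. Qed.

Lemma sparse_constant_nonneg (d k q : nat) : 0 <= sparse_constant d k q.
Proof. unfold sparse_constant; repeat (apply Z.mul_nonneg_nonneg || apply Z.pow_nonneg); lia. Qed.

(* Part (i) over the integers: the multi-indices with [||j_1|| ... ||j_p|| <= N]
   are covered dyadically using sup-norm boxes as balls ([c = 3^d], [D = d]). *)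
Lemma dense_count (d p' q : nat) (N : Z) (s : list (list Z * list (list Z))) :
  1 <= N -> NoDup s ->
  (forall x, In x s -> wf d (S p') (fst x) (snd x) /\
     maxAbs (Mvec (fst x) (snd x)) <= Z.of_nat q /\ prodZ normInf (snd x) <= N) ->
  Z.of_nat (length s) <= dense_constant d p' q * N ^ Z.of_nat d * (Z.log2 N + 1) ^ Z.of_nat p'.
Proof.
  intros HN Hnd Hs.
  set (T := dyadic_cover (list Z) (box d) p' N).
  assert (HT : Z.of_nat (length T) <= cover_bound (3 ^ Z.of_nat d) (Z.of_nat d) p' N).
  { apply dyadic_cover_length; [apply Z.pow_nonneg; lia| |exact HN].
    intros m Hm. eapply Z.le_trans; [apply length_box; lia|].
    rewrite <- Z.pow_mul_l; apply Z.pow_le_mono_l; lia. }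
  eapply Z.le_trans.
  { apply (tuples_count d q T s Hnd). intros x Hx.
    destruct (Hs x Hx) as ((Hl & Hp & Hjs) & Hmax & Hprod). repeat split; try assumption.
    apply (dyadic_cover_complete _ _ (fun j => length j = d) normInf);
      [exact normInf_ge1|intros m j Hj Hjm; apply box_complete, fold_max_abs_bound with (b := 1)
      |exact Hp|exact Hjs|exact Hprod]; assumption. }
  assert (0 <= (2 * Z.of_nat q + 1) ^ Z.of_nat d) by (apply Z.pow_nonneg; lia).
  unfold cover_bound, dense_constant in *. nia.
Qed.

(* Part (ii) over the integers: flattening [(j_1, ..., j_p)] into its [dp = k + 1]
   coordinates, the multi-indices with [|j_1| ... |j_p| <= N] are covered
   dyadically using integer intervals as balls ([c = 3], [D = 1]). *)
Lemma sparse_count (d p k q : nat) (N : Z) (s : list (list Z * list (list Z))) :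
  (d * p = S k)%nat -> 1 <= N -> NoDup s ->
  (forall x, In x s -> wf d p (fst x) (snd x) /\
     maxAbs (Mvec (fst x) (snd x)) <= Z.of_nat q /\ prodZ sparseSize (snd x) <= N) ->
  Z.of_nat (length s) <= sparse_constant d k q * N ^ Z.of_nat 1 * (Z.log2 N + 1) ^ Z.of_nat k.
Proof.
  intros Hk HN Hnd Hs.
  set (T := map (chunk d p) (dyadic_cover Z interval k N)).
  assert (HT : Z.of_nat (length T) <= cover_bound 3 1 k N).
  { unfold T; rewrite length_map. apply dyadic_cover_length; [lia| |exact HN].
    intros m Hm; rewrite length_interval by lia; lia. }
  eapply Z.le_trans.
  { apply (tuples_count d q T s Hnd). intros x Hx.
    destruct (Hs x Hx) as ((Hl & Hp & Hjs) & Hmax & Hprod). repeat split; try assumption.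
    apply in_map_iff; exists (concat (snd x)); split; [rewrite <- Hp; now apply chunk_concat|].
    apply (dyadic_cover_complete _ _ (fun _ => True) (fun x => 1 + Z.abs x)).
    - intros y; lia.
    - intros m y _ Hy; apply interval_complete; lia.
    - rewrite (length_concat_uniform d) by assumption. now rewrite Hp.
    - now apply Forall_forall.
    - now rewrite <- prodZ_sparseSize. }
  assert (0 <= (2 * Z.of_nat q + 1) ^ Z.of_nat d) by (apply Z.pow_nonneg; lia).
  unfold cover_bound, sparse_constant in *; change (Z.of_nat 1) with 1; rewrite !Z.pow_1_r in *.
  nia.
Qed.

Open Scope R_scope.

Lemma ln_le_ln (x y : R) : 0 < x -> x <= y -> ln x <= ln y.
Proof.
  intros Hx [Hlt|<-]; [left; now apply ln_increasing|right; reflexivity].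
Qed.

Lemma ln_nonneg (N : nat) : (2 <= N)%nat -> 0 <= ln (INR N).
Proof.
  intros HN; rewrite <- ln_1; apply ln_le_ln; [lra|].
  apply le_INR in HN; cbn in HN; lra.
Qed.

(* [log2 N + 1 <= 4 ln N] for [N >= 2], using [ln 2 > 1/2]. *)
Lemma log2_le_ln (N : nat) : (2 <= N)%nat -> IZR (Z.log2 (Z.of_nat N) + 1) <= 4 * ln (INR N).
Proof.
  intros HN. set (k := Z.log2 (Z.of_nat N)).
  assert (Hk1 : (1 <= k)%Z) by (change 1%Z with (Z.log2 2); apply Z.log2_le_mono; lia).
  assert (Hpow : (2 ^ k <= Z.of_nat N)%Z) by (apply Z.log2_spec; lia).
  assert (Hln : ln (2 ^ Z.to_nat k) <= ln (INR N)).
  { apply ln_le_ln; [apply pow_lt; lra|].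
    rewrite INR_IZR_INZ, pow_IZR, Z2Nat.id by lia. now apply IZR_le. }
  rewrite ln_pow, INR_IZR_INZ, Z2Nat.id in Hln by (lra || lia).
  assert (Hln2 := ln_lt_2). apply IZR_le in Hk1. rewrite plus_IZR. nra.
Qed.

Lemma count_to_real (len N D e : nat) (A : Z) : (2 <= N)%nat -> (0 <= A)%Z ->
  (Z.of_nat len <= A * Z.of_nat N ^ Z.of_nat D * (Z.log2 (Z.of_nat N) + 1) ^ Z.of_nat e)%Z ->
  INR len <= IZR A * 4 ^ e * INR N ^ D * ln (INR N) ^ e.
Proof.
  intros HN HA Hlen. apply IZR_le in Hlen.
  rewrite !mult_IZR, <- !pow_IZR, <- !INR_IZR_INZ in Hlen.
  assert (Hlog : IZR (Z.log2 (Z.of_nat N) + 1) ^ e <= (4 * ln (INR N)) ^ e).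
  { apply pow_incr; split; [|now apply log2_le_ln].
    apply IZR_le; assert (0 <= Z.log2 (Z.of_nat N))%Z by apply Z.log2_nonneg; lia. }
  assert (Hc : 0 <= IZR A * INR N ^ D)
    by (apply Rmult_le_pos; [now apply IZR_le|apply pow_le, pos_INR]).
  rewrite Rpow_mult_distr in Hlog.
  eapply Rle_trans; [exact Hlen|].
  replace (IZR A * 4 ^ e * INR N ^ D * ln (INR N) ^ e)
    with (IZR A * INR N ^ D * (4 ^ e * ln (INR N) ^ e)) by ring.
  now apply Rmult_le_compat_l.
Qed.

Lemma weaken_constant (x a C B1 B2 : R) :
  x <= a * B1 * B2 -> a <= C -> 0 <= B1 -> 0 <= B2 -> x <= C * B1 * B2.
Proof.
  intros Hx HaC H1 H2. eapply Rle_trans; [exact Hx|].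
  apply Rmult_le_compat_r, Rmult_le_compat_r; assumption.
Qed.

Theorem lemma4p2 (d p q : nat) (hd : (1 <= d)%nat) (hp : (1 <= p)%nat) :
  exists C : R,
    forall (A : Type) (zero : A) (a : list Z -> list (list Z) -> A),
      (forall l js, wf d p l js -> (maxAbs (Mvec l js) > Z.of_nat q)%Z -> a l js = zero) ->
      forall (M : option nat) (N : nat), (2 <= N)%nat ->
        (forall s : list (list Z * list (list Z)),
            NoDup s ->
            (forall x, In x s ->
               wf d p (fst x) (snd x) /\ inK M (fst x) /\ Forall (inK M) (snd x) /\
               (prodZ normInf (snd x) <= Z.of_nat N)%Z /\ a (fst x) (snd x) <> zero) ->
            (INR (length s) <= C * INR N ^ d * ln (INR N) ^ (p - 1))%R)
        /\
        (forall s : list (list Z * list (list Z)),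
            NoDup s ->
            (forall x, In x s ->
               wf d p (fst x) (snd x) /\ inKstar M (fst x) /\ Forall (inKstar M) (snd x) /\
               (prodZ sparseSize (snd x) <= Z.of_nat N)%Z /\ a (fst x) (snd x) <> zero) ->
            (INR (length s) <= C * INR N * ln (INR N) ^ (d * p - 1))%R).
Proof.
  destruct p as [|p']; [lia|]. replace (S p' - 1)%nat with p' by lia.
  set (k := (d * S p' - 1)%nat). assert (Hk : (d * S p' = S k)%nat) by lia.
  set (C1 := IZR (dense_constant d p' q) * 4 ^ p').
  set (C2 := IZR (sparse_constant d k q) * 4 ^ k).
  exists (Rmax C1 C2). intros A zero a Ha M N HN.
  assert (HN1 : (1 <= Z.of_nat N)%Z) by lia.
  assert (Hln := ln_nonneg N HN).
  split; intros s Hnd Hs.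
  - apply weaken_constant with C1; [|apply Rmax_l|apply pow_le, pos_INR|now apply pow_le].
    apply count_to_real; [exact HN|apply dense_constant_nonneg|].
    apply (dense_count d p' q _ s HN1 Hnd). intros x Hx.
    destruct (Hs x Hx) as (Hwf & _ & _ & Hprod & Hnz).
    split; [exact Hwf|split; [exact (support_bound _ _ _ _ _ _ _ _ Ha Hwf Hnz)|exact Hprod]].
  - rewrite <- (pow_1 (INR N)) at 1.
    apply weaken_constant with C2; [|apply Rmax_r|apply pow_le, pos_INR|now apply pow_le].
    apply count_to_real; [exact HN|apply sparse_constant_nonneg|].
    apply (sparse_count d (S p') k q _ s Hk HN1 Hnd). intros x Hx.
    destruct (Hs x Hx) as (Hwf & _ & _ & Hprod & Hnz).
    split; [exact Hwf|split; [exact (support_bound _ _ _ _ _ _ _ _ Ha Hwf Hnz)|exact Hprod]].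
Qed.
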